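(* For any $f : X \to \mathbb{R}$, Player II has a winning strategy in $\Gamma(f)$ if and only if $f$ is a limsup function.
   Context: Let $A$ be a non-empty countable set and $T$ a pruned tree on $A$ (a set of finite sequences of elements of $A$, closed under initial segments, in which every sequence has a proper extension in $T$). Let $X$ be the set of infinite branches of $T$, with the topology generated by the cylinder sets $O(s) = \{x \in X : s \text{ is an initial segment of } x\}$, $s \in T$. A function $f : X \to \mathbb{R}$ is a limsup function if there exists $u : T \to \mathbb{R}$ with $f(x) = \limsup_{t\to\infty} u(x_0,\dots,x_t)$ for every $x \in X$. The game $\Gamma(f)$: Player I and Player II alternate, Player I moving first; Player I plays $x_0, x_1, \dots \in A$ subject to $(x_0,\dots,x_t) \in T$ for all $t$, and after each move $x_t$ Player II plays a real number $v_t$ (both players see all previous moves). Player II wins the run $(x_0,v_0,x_1,v_1,\dots)$ iff $f(x_0,x_1,\dots) = \limsup_{t\to\infty} v_t$; otherwise Player I wins. *)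

From Stdlib Require Import Reals List.
From Coquelicot Require Import Coquelicot.
Import ListNotations.
Open Scope R_scope.

(* Finite sequences over A are lists, (x_0,...,x_t) = [x_0; ...; x_t]. *)

Definition countable_set (A : Type) : Prop :=
  exists g : A -> nat, forall a b, g a = g b -> a = b.

Definition is_tree {A : Type} (T : list A -> Prop) : Prop :=
  forall s t : list A, T (s ++ t) -> T s.

Definition pruned {A : Type} (T : list A -> Prop) : Prop :=
  forall s : list A, T s -> exists t : list A, t <> [] /\ T (s ++ t).

Definition prefix {A : Type} (x : nat -> A) (n : nat) : list A :=
  map x (seq 0 n).

Definition is_branch {A : Type} (T : list A -> Prop) (x : nat -> A) : Prop :=
  forall n : nat, T (prefix x n).

Definition branches {A : Type} (T : list A -> Prop) : Type :=
  { x : nat -> A | is_branch T x }.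

Definition limsup_function {A : Type} (T : list A -> Prop)
  (f : branches T -> R) : Prop :=
  exists u : list A -> R, forall x : branches T,
    LimSup_seq (fun t => u (prefix (proj1_sig x) (S t))) = Finite (f x).

(* A strategy of Player II: given the history (x_0,v_0,...,x_{t-1},v_{t-1})
   and Player I's current move x_t, it returns v_t. *)
Definition strategyII (A : Type) : Type := list (A * R) -> A -> R.

Fixpoint play_hist {A : Type} (sigma : strategyII A) (x : nat -> A) (t : nat)
  : list (A * R) :=
  match t with
  | O => []
  | S t' => let h := play_hist sigma x t' in h ++ [(x t', sigma h (x t'))]
  end.

Definition moveII {A : Type} (sigma : strategyII A) (x : nat -> A) (t : nat) : R :=
  sigma (play_hist sigma x t) (x t).

Definition winning_II {A : Type} (T : list A -> Prop) (f : branches T -> R)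
  (sigma : strategyII A) : Prop :=
  forall x : branches T,
    LimSup_seq (moveII sigma (proj1_sig x)) = Finite (f x).

Definition II_has_winning_strategy {A : Type} (T : list A -> Prop)
  (f : branches T -> R) : Prop :=
  exists sigma : strategyII A, winning_II T f sigma.

From Stdlib Require Import Reals List Lia FunctionalExtensionality.
From Coquelicot Require Import Coquelicot.
Import ListNotations.

(* Since Player II sees the whole history, a strategy for II and a function
   u on finite sequences carry the same information along any run:
   - a function u yields the strategy "answer x_t by u(x_0,...,x_t)", whose
     moves along the run x are exactly u (prefix x (S t));
   - conversely, the t-th move of a strategy sigma depends only on the first
     t+1 moves of Player I, so it is u (prefix x (S t)) for the function u
     that replays sigma against (any extension of) a finite sequence.
   Hence the sequences (v_t) and (u(x_0,...,x_t)) coincide in both directions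
   and so do their limsups; the theorem follows, for any set T of sequences. *)

Lemma prefix_S {A : Type} (x : nat -> A) (t : nat) :
  prefix x (S t) = prefix x t ++ [x t].
Proof. unfold prefix. now rewrite seq_S, map_app. Qed.

Lemma nth_prefix {A : Type} (x : nat -> A) (t n : nat) (d : A) :
  (n < t)%nat -> nth n (prefix x t) d = x n.
Proof.
  intros Hn. unfold prefix. rewrite nth_indep with (d' := x 0%nat).
  - now rewrite map_nth, seq_nth by lia.
  - rewrite length_map, length_seq. lia.
Qed.

Section Strategies.

Context {A : Type}.

Lemma play_hist_ext (sigma : strategyII A) (x y : nat -> A) (t : nat) :
  (forall n, (n < t)%nat -> x n = y n) ->
  play_hist sigma x t = play_hist sigma y t.
Proof.
  induction t as [|t IH]; intros Hxy; simpl; [reflexivity|].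
  rewrite IH by (intros; apply Hxy; lia).
  now rewrite (Hxy t) by lia.
Qed.

Definition strategy_of (u : list A -> R) : strategyII A :=
  fun h a => u (map fst h ++ [a]).

(* The value sigma assigns to a position s: its last move when Player I
   plays s (padded by the default letter d). *)
Definition value_of (sigma : strategyII A) (d : A) (s : list A) : R :=
  moveII sigma (fun n => nth n s d) (length s - 1).

Lemma moveII_strategy_of (u : list A -> R) (x : nat -> A) (t : nat) :
  moveII (strategy_of u) x t = u (prefix x (S t)).
Proof.
  assert (Hhist : map fst (play_hist (strategy_of u) x t) = prefix x t).
  { induction t as [|t IH]; simpl; [reflexivity|].
    now rewrite map_app, IH, prefix_S. }
  unfold moveII, strategy_of at 1. now rewrite Hhist, prefix_S.
Qed.

Lemma moveII_value_of (sigma : strategyII A) (d : A) (x : nat -> A) (t : nat) :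
  moveII sigma x t = value_of sigma d (prefix x (S t)).
Proof.
  unfold value_of.
  replace (length (prefix x (S t)) - 1)%nat with t
    by (unfold prefix; rewrite length_map, length_seq; lia).
  unfold moveII.
  rewrite (nth_prefix x (S t) t d) by lia. f_equal.
  apply play_hist_ext. intros n Hn. symmetry. apply nth_prefix. lia.
Qed.

Variable T : list A -> Prop.
Variable f : branches T -> R.

Lemma limsup_function_of_winning (d : A) (sigma : strategyII A) :
  winning_II T f sigma -> limsup_function T f.
Proof.
  intros Hwin. exists (value_of sigma d). intros x.
  rewrite <- (Hwin x). f_equal. apply functional_extensionality. intros t.
  symmetry. apply moveII_value_of.
Qed.

Lemma winning_of_limsup_function (u : list A -> R) :
  (forall x : branches T,
     LimSup_seq (fun t => u (prefix (proj1_sig x) (S t))) = Finite (f x)) ->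
  winning_II T f (strategy_of u).
Proof.
  intros Hu x. rewrite <- (Hu x). f_equal.
  apply functional_extensionality. intros t. apply moveII_strategy_of.
Qed.

End Strategies.

Theorem mainTheorem6 (A : Type) (T : list A -> Prop)
  (hne : inhabited A) (hcount : countable_set A)
  (htree : is_tree T) (hpruned : pruned T) (f : branches T -> R) :
  II_has_winning_strategy T f <-> limsup_function T f.
Proof.
  destruct hne as [d]. split.
  - intros [sigma Hwin]. exact (limsup_function_of_winning T f d sigma Hwin).
  - intros [u Hu]. exists (strategy_of u). exact (winning_of_limsup_function T f u Hu).
Qed.
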